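(* For all complex $q$ with $|q|<1$, $$F^{\rm ed}_{\rm od}(q)=\frac{q\,(-q^2;q^2)_\infty}{1-q}\left(2-\frac{(-q;q^2)_\infty}{(-q^2;q^2)_\infty}\right).$$
   Context: For $n\in\mathbb N_0\cup\{\infty\}$, $(a;q)_n:=\prod_{j=0}^{n-1}(1-aq^j)$. Define $$F^{\rm ed}_{\rm od}(q):=\sum_{n=0}^\infty q^{2n+1}(-q;q^2)_n(-q^{2n+2};q^2)_\infty,$$ the generating function for partitions into at least one odd part, with odd parts distinct, and even parts distinct and all larger than every odd part. *)

From Stdlib Require Import Reals.
Open Scope R_scope.

Definition Cplx : Type := (R * R)%type.

Definition RtoC (x : R) : Cplx := (x, 0).
Definition Czero : Cplx := (0, 0).
Definition Cone : Cplx := (1, 0).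
Definition Cadd (z w : Cplx) : Cplx := (fst z + fst w, snd z + snd w).
Definition Copp (z : Cplx) : Cplx := (- fst z, - snd z).
Definition Csub (z w : Cplx) : Cplx := Cadd z (Copp w).
Definition Cmul (z w : Cplx) : Cplx :=
  (fst z * fst w - snd z * snd w, fst z * snd w + snd z * fst w).
Definition Cinv (z : Cplx) : Cplx :=
  (fst z / (fst z ^ 2 + snd z ^ 2), - snd z / (fst z ^ 2 + snd z ^ 2)).
Definition Cdiv (z w : Cplx) : Cplx := Cmul z (Cinv w).
Fixpoint Cpow (z : Cplx) (n : nat) : Cplx :=
  match n with O => Cone | S m => Cmul z (Cpow z m) end.
Definition Cmod (z : Cplx) : R := sqrt (fst z ^ 2 + snd z ^ 2).

Definition Ccv (u : nat -> Cplx) (l : Cplx) : Prop :=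
  forall eps : R, eps > 0 -> exists N : nat, forall n : nat, (n >= N)%nat ->
    Cmod (Csub (u n) l) < eps.

Fixpoint Csum (f : nat -> Cplx) (n : nat) : Cplx :=
  match n with O => Czero | S m => Cadd (Csum f m) (f m) end.

Fixpoint qpoch (a q : Cplx) (n : nat) : Cplx :=
  match n with O => Cone | S m => Cmul (qpoch a q m) (Csub Cone (Cmul a (Cpow q m))) end.

Definition qpoch_inf_is (a q l : Cplx) : Prop := Ccv (fun n => qpoch a q n) l.

Definition series_is (f : nat -> Cplx) (s : Cplx) : Prop := Ccv (fun N => Csum f N) s.

(* Write Q = q^2, a_N = (-q;Q)_N, c_N = (-Q;Q)_N and T_N = a_N (1 + Q^N) / c_N.
   Since a_(N+1) = a_N (1 + q Q^N) and c_(N+1) = c_N (1 + Q^(N+1)), one finds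
   T_N - T_(N+1) = (1 - q) Q^N a_N / c_N, while T_0 = 2.  As (-q^(2n+2);Q)_oo =
   A / c_n with A = (-Q;Q)_oo, the n-th summand is A q/(1-q) (T_n - T_(n+1)), so the
   N-th partial sum is q/(1-q) (2A - A T_N), and A T_N tends to A (B / A) with
   B = (-q;Q)_oo. *)

From Coquelicot Require Import Rbar Lim_seq Hierarchy Series.
From Coquelicot Require Complex.
From Stdlib Require Import Reals Lra Lia.
Open Scope R_scope.

(* The complex operations are definitionally those of Coquelicot's [Complex]. *)
Lemma Cfield_theory : field_theory Czero Cone Cadd Cmul Csub Copp Cdiv Cinv (@eq Cplx).
Proof. exact Complex.C_field_theory. Qed.
Add Field Cfield : Cfield_theory.

Lemma Cmod_mul x y : Cmod (Cmul x y) = Cmod x * Cmod y.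
Proof. exact (Complex.Cmod_mult x y). Qed.

Lemma Cmod_triangle x y : Cmod (Cadd x y) <= Cmod x + Cmod y.
Proof. exact (Complex.Cmod_triangle x y). Qed.

Lemma Cmod_ge0 x : 0 <= Cmod x.
Proof. exact (Complex.Cmod_ge_0 x). Qed.

Lemma Cmod_gt0 x : x <> Czero <-> 0 < Cmod x.
Proof. exact (Complex.Cmod_gt_0 x). Qed.

Lemma Cmod_zero : Cmod Czero = 0.
Proof. exact Complex.Cmod_0. Qed.

Lemma Cmod_one : Cmod Cone = 1.
Proof. exact Complex.Cmod_1. Qed.

Lemma Cmod_opp x : Cmod (Copp x) = Cmod x.
Proof. exact (Complex.Cmod_opp x). Qed.

Lemma Cmod_pow x n : Cmod (Cpow x n) = Cmod x ^ n.
Proof. exact (Complex.Cmod_pow x n). Qed.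

Lemma Cmod_fst x : Rabs (fst x) <= Cmod x.
Proof. exact (Complex.re_le_Cmod x). Qed.

Lemma Cmod_snd x : Rabs (snd x) <= Cmod x.
Proof. eapply Rle_trans; [apply Rmax_r | exact (Complex.Rmax_Cmod x)]. Qed.

Lemma Cmod_le_abs_sum x : Cmod x <= Rabs (fst x) + Rabs (snd x).
Proof.
  unfold Cmod. pose proof (Rabs_pos (fst x)); pose proof (Rabs_pos (snd x)).
  rewrite <- (sqrt_pow2 (Rabs (fst x) + Rabs (snd x))) by lra.
  apply sqrt_le_1_alt. rewrite <- (pow2_abs (fst x)), <- (pow2_abs (snd x)). nra.
Qed.

Lemma Czero_dec z : {z = Czero} + {z <> Czero}.
Proof.
  destruct z as [x y]; destruct (Req_EM_T x 0), (Req_EM_T y 0); subst;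
    [left; reflexivity | right; intro E; inversion E; contradiction ..].
Qed.

Lemma Csub_one_neq0 z : Cmod z < 1 -> Csub Cone z <> Czero.
Proof.
  intros Hz E. pose proof (Cmod_triangle (Csub Cone z) z) as Htri.
  replace (Cadd (Csub Cone z) z) with Cone in Htri by ring.
  rewrite E, Cmod_one, Cmod_zero in Htri. lra.
Qed.

Lemma Cpow_add z m n : Cpow z (m + n) = Cmul (Cpow z m) (Cpow z n).
Proof. induction m as [|m IH]; simpl; [ring | rewrite IH; ring]. Qed.

Lemma Cpow_mul z m n : Cpow z (m * n) = Cpow (Cpow z m) n.
Proof.
  induction n as [|n IH]; [now rewrite Nat.mul_0_r |].
  rewrite Nat.mul_succ_r, Cpow_add, IH. simpl. ring.
Qed.

Lemma Ccv_components u l : Ccv u l <->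
  is_lim_seq (fun n => fst (u n)) (fst l) /\ is_lim_seq (fun n => snd (u n)) (snd l).
Proof.
  rewrite !is_lim_seq_Reals. unfold Ccv, Un_cv, R_dist. split.
  - intros H; split; intros eps Heps; destruct (H eps Heps) as [N HN]; exists N;
      intros n Hn; specialize (HN n Hn).
    + pose proof (Cmod_fst (Csub (u n) l)). simpl in *. unfold Rminus. lra.
    + pose proof (Cmod_snd (Csub (u n) l)). simpl in *. unfold Rminus. lra.
  - intros [H1 H2] eps Heps.
    destruct (H1 (eps / 2)) as [N1 HN1]; [lra |].
    destruct (H2 (eps / 2)) as [N2 HN2]; [lra |].
    exists (max N1 N2). intros n Hn.
    specialize (HN1 n ltac:(lia)). specialize (HN2 n ltac:(lia)).
    pose proof (Cmod_le_abs_sum (Csub (u n) l)). simpl in *. unfold Rminus in *. lra.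
Qed.

Lemma Ccv_ext u v l : (forall n, u n = v n) -> Ccv u l -> Ccv v l.
Proof.
  intros E H eps Heps. destruct (H eps Heps) as [N HN].
  exists N. intros n Hn. rewrite <- E. auto.
Qed.

Lemma Ccv_const c : Ccv (fun _ => c) c.
Proof. apply Ccv_components. split; apply is_lim_seq_const. Qed.

Lemma Ccv_add u v l m : Ccv u l -> Ccv v m -> Ccv (fun n => Cadd (u n) (v n)) (Cadd l m).
Proof. rewrite !Ccv_components. intros [] []. split; apply is_lim_seq_plus'; auto. Qed.

Lemma Ccv_opp u l : Ccv u l -> Ccv (fun n => Copp (u n)) (Copp l).
Proof.
  rewrite !Ccv_components. intros [H1 H2].
  split; [apply (is_lim_seq_opp _ (fst l)) | apply (is_lim_seq_opp _ (snd l))]; auto.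
Qed.

Lemma Ccv_sub u v l m : Ccv u l -> Ccv v m -> Ccv (fun n => Csub (u n) (v n)) (Csub l m).
Proof. intros. apply Ccv_add; [| apply Ccv_opp]; auto. Qed.

Lemma Ccv_mul u v l m : Ccv u l -> Ccv v m -> Ccv (fun n => Cmul (u n) (v n)) (Cmul l m).
Proof.
  rewrite !Ccv_components. intros [] []. simpl. split.
  - apply is_lim_seq_minus'; apply is_lim_seq_mult'; auto.
  - apply is_lim_seq_plus'; apply is_lim_seq_mult'; auto.
Qed.

Lemma Ccv_inv u l : l <> Czero -> Ccv u l -> Ccv (fun n => Cinv (u n)) (Cinv l).
Proof.
  intros Hl. rewrite !Ccv_components. intros [Hre Him]. unfold Cinv; cbn [fst snd].
  assert (Hnorm : fst l ^ 2 + snd l ^ 2 <> 0).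
  { destruct l as [x y]; simpl; intro E; apply Hl.
    assert (x = 0) by nra; assert (y = 0) by nra; subst; reflexivity. }
  assert (Hsq : forall (w : nat -> R) (c : R), is_lim_seq w c ->
            is_lim_seq (fun n => w n ^ 2) (c ^ 2)).
  { intros w c Hw. apply (is_lim_seq_ext (fun n => w n * w n)); [intros; ring |].
    replace (c ^ 2) with (c * c) by ring. apply is_lim_seq_mult'; auto. }
  split; apply is_lim_seq_div'; auto;
    try (apply is_lim_seq_plus'; apply Hsq; auto).
  apply (is_lim_seq_opp _ (snd l)); auto.
Qed.

Lemma Ccv_div u v l m :
  m <> Czero -> Ccv u l -> Ccv v m -> Ccv (fun n => Cdiv (u n) (v n)) (Cdiv l m).
Proof. intros. apply Ccv_mul; [| apply Ccv_inv]; auto. Qed.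

(* The factor [m] absorbs the junk value [Cinv Czero = Czero]. *)
Lemma Ccv_mul_div_lim u v l m :
  Ccv u l -> Ccv v m -> Ccv (fun n => Cmul m (Cdiv (u n) (v n))) (Cmul m (Cdiv l m)).
Proof.
  intros Hu Hv. destruct (Czero_dec m) as [-> | Hm].
  - apply (Ccv_ext (fun _ => Czero)); [intros; ring |].
    replace (Cmul Czero (Cdiv l Czero)) with Czero by ring. apply Ccv_const.
  - apply Ccv_mul; [apply Ccv_const | apply Ccv_div; auto].
Qed.

Lemma Ccv_shift u l k : Ccv u l -> Ccv (fun n => u (k + n)%nat) l.
Proof.
  intros H eps Heps. destruct (H eps Heps) as [N HN].
  exists N. intros n Hn. apply HN. lia.
Qed.

Lemma Ccv_pow_lt1 z : Cmod z < 1 -> Ccv (fun n => Cpow z n) Czero.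
Proof.
  intros Hz eps Heps.
  destruct (pow_lt_1_zero (Cmod z) ltac:(rewrite Rabs_pos_eq; auto using Cmod_ge0) eps Heps)
    as [N HN].
  exists N. intros n Hn. replace (Csub (Cpow z n) Czero) with (Cpow z n) by ring.
  rewrite Cmod_pow. specialize (HN n Hn).
  rewrite Rabs_pos_eq in HN; auto using pow_le, Cmod_ge0.
Qed.

Lemma is_lim_seq_of_geometric_increments (x : nat -> R) (C r : R) : 0 <= r < 1 ->
  (forall n, Rabs (x (S n) - x n) <= C * r ^ n) -> exists l : R, is_lim_seq x l.
Proof.
  intros Hr Hinc. set (d := fun n => x (S n) - x n).
  assert (Hd : ex_series d).
  { apply (ex_series_le d (fun n => C * r ^ n)); [exact Hinc |].
    apply (ex_series_scal_l C (fun n => r ^ n)), ex_series_geom.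
    rewrite Rabs_pos_eq; lra. }
  exists (x 0%nat + Series d). apply is_lim_seq_incr_1.
  apply (is_lim_seq_ext (fun m => x 0%nat + sum_n d m)).
  - intros m. induction m as [|m IH].
    + rewrite sum_O. unfold d. ring.
    + rewrite sum_Sn. change (plus (sum_n d m) (d (S m))) with (sum_n d m + d (S m)).
      unfold d at 2. lra.
  - apply is_lim_seq_plus'; [apply is_lim_seq_const | exact (Series_correct d Hd)].
Qed.

Lemma Ccv_of_geometric_increments (u : nat -> Cplx) (C r : R) : 0 <= r < 1 ->
  (forall n, Cmod (Csub (u (S n)) (u n)) <= C * r ^ n) -> exists l, Ccv u l.
Proof.
  intros Hr Hinc.
  destruct (is_lim_seq_of_geometric_increments (fun n => fst (u n)) C r Hr) as [l1 H1].
  { intros n. pose proof (Cmod_fst (Csub (u (S n)) (u n))). specialize (Hinc n).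
    simpl in *. unfold Rminus. lra. }
  destruct (is_lim_seq_of_geometric_increments (fun n => snd (u n)) C r Hr) as [l2 H2].
  { intros n. pose proof (Cmod_snd (Csub (u (S n)) (u n))). specialize (Hinc n).
    simpl in *. unfold Rminus. lra. }
  exists (l1, l2). apply Ccv_components. auto.
Qed.

Lemma qpoch_S a Q n :
  qpoch a Q (S n) = Cmul (qpoch a Q n) (Csub Cone (Cmul a (Cpow Q n))).
Proof. reflexivity. Qed.

Lemma qpoch_add a Q n m :
  qpoch a Q (n + m) = Cmul (qpoch a Q n) (qpoch (Cmul a (Cpow Q n)) Q m).
Proof.
  induction m as [|m IH]; [rewrite Nat.add_0_r; simpl; ring |].
  rewrite Nat.add_succ_r, !qpoch_S, IH, Cpow_add. ring.
Qed.

Lemma qpoch_neq0 a Q n : Cmod a < 1 -> Cmod Q <= 1 -> qpoch a Q n <> Czero.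
Proof.
  intros Ha HQ. apply Cmod_gt0. induction n as [|n IH].
  - simpl. rewrite Cmod_one. lra.
  - rewrite qpoch_S, Cmod_mul. apply Rmult_lt_0_compat; [exact IH |].
    apply Cmod_gt0, Csub_one_neq0. rewrite Cmod_mul, Cmod_pow.
    assert (Cmod Q ^ n <= 1) by (rewrite <- (pow1 n); apply pow_incr; auto using Cmod_ge0).
    pose proof (Cmod_ge0 a). pose proof (pow_le (Cmod Q) n (Cmod_ge0 Q)). nra.
Qed.

Lemma qpoch_bound a Q n :
  Cmod Q < 1 -> Cmod (qpoch a Q n) <= exp (Cmod a / (1 - Cmod Q)).
Proof.
  intros HQ. pose proof (Cmod_ge0 Q). pose proof (Cmod_ge0 a).
  set (r := Cmod Q) in *. set (al := Cmod a) in *.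
  assert (Hpartial : Cmod (qpoch a Q n) <= exp (al * (1 - r ^ n) / (1 - r))).
  { induction n as [|n IH].
    - simpl. rewrite Cmod_one. replace (al * (1 - 1) / (1 - r)) with 0 by (field; lra).
      rewrite exp_0. lra.
    - rewrite qpoch_S, Cmod_mul.
      replace (al * (1 - r ^ S n) / (1 - r)) with (al * (1 - r ^ n) / (1 - r) + al * r ^ n)
        by (simpl; field; lra).
      rewrite exp_plus. apply Rmult_le_compat; auto using Cmod_ge0.
      eapply Rle_trans; [| apply exp_ineq1_le].
      unfold Csub. eapply Rle_trans; [apply Cmod_triangle |].
      rewrite Cmod_one, Cmod_opp, Cmod_mul, Cmod_pow. fold al r. lra. }
  eapply Rle_trans; [exact Hpartial |].
  assert (Hexp : al * (1 - r ^ n) / (1 - r) <= al / (1 - r)).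
  { unfold Rdiv. apply Rmult_le_compat_r; [apply Rlt_le, Rinv_0_lt_compat; lra |].
    pose proof (pow_le r n (Cmod_ge0 Q)). nra. }
  destruct (Rle_lt_or_eq_dec _ _ Hexp) as [Hlt | ->]; [left; apply exp_increasing |]; lra.
Qed.

Lemma qpoch_inf_exists a Q : Cmod Q < 1 -> exists l, qpoch_inf_is a Q l.
Proof.
  intros HQ. apply (Ccv_of_geometric_increments _ (exp (Cmod a / (1 - Cmod Q)) * Cmod a) (Cmod Q)).
  { split; [apply Cmod_ge0 | exact HQ]. }
  intros n. rewrite qpoch_S.
  replace (Csub (Cmul (qpoch a Q n) (Csub Cone (Cmul a (Cpow Q n)))) (qpoch a Q n))
    with (Copp (Cmul (qpoch a Q n) (Cmul a (Cpow Q n)))) by ring.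
  rewrite Cmod_opp, !Cmod_mul, Cmod_pow, <- Rmult_assoc.
  apply Rmult_le_compat_r; [apply pow_le, Cmod_ge0 |].
  apply Rmult_le_compat_r; [apply Cmod_ge0 | apply qpoch_bound, HQ].
Qed.

Lemma qpoch_inf_tail a Q l n : qpoch a Q n <> Czero ->
  qpoch_inf_is a Q l -> qpoch_inf_is (Cmul a (Cpow Q n)) Q (Cdiv l (qpoch a Q n)).
Proof.
  intros Hn Hl.
  apply (Ccv_ext (fun m => Cdiv (qpoch a Q (n + m)) (qpoch a Q n))).
  - intros m. rewrite qpoch_add. field. exact Hn.
  - apply Ccv_div; [exact Hn | apply Ccv_shift, Hl | apply Ccv_const].
Qed.

Lemma Csum_telescope (f t : nat -> Cplx) (k : Cplx) N :
  (forall n, f n = Cmul k (Csub (t n) (t (S n)))) -> Csum f N = Cmul k (Csub (t 0%nat) (t N)).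
Proof.
  intros Hf. induction N as [|N IH]; simpl; [ring |]. rewrite IH, Hf. ring.
Qed.

Definition telescoper (q : Cplx) (N : nat) : Cplx :=
  Cdiv (Cmul (qpoch (Copp q) (Cpow q 2) N) (Cadd Cone (Cpow (Cpow q 2) N)))
       (qpoch (Copp (Cpow q 2)) (Cpow q 2) N).

Lemma telescoper_0 q : telescoper q 0 = RtoC 2.
Proof.
  unfold telescoper. cbn [qpoch Cpow]. transitivity (Cadd Cone Cone); [field; exact (F_1_neq_0 Cfield_theory) |].
  unfold Cadd, Cone, RtoC; simpl. f_equal; ring.
Qed.

Lemma Cmod_sqr_lt1 q : Cmod q < 1 -> Cmod (Cpow q 2) < 1.
Proof. intros Hq. rewrite Cmod_pow. apply pow_lt_1_compat; [split; auto using Cmod_ge0 | lia]. Qed.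

Lemma qpoch_opp_neq0 Q n : Cmod Q < 1 -> qpoch (Copp Q) Q n <> Czero.
Proof. intros HQ. apply qpoch_neq0; [rewrite Cmod_opp |]; lra. Qed.

Lemma telescoper_step q N : Cmod q < 1 ->
  Cmul (Cpow q (2 * N + 1))
       (Cdiv (qpoch (Copp q) (Cpow q 2) N) (qpoch (Copp (Cpow q 2)) (Cpow q 2) N))
  = Cmul (Cdiv q (Csub Cone q)) (Csub (telescoper q N) (telescoper q (S N))).
Proof.
  intros Hq. pose proof (Cmod_sqr_lt1 q Hq) as HQ.
  pose proof (qpoch_opp_neq0 _ N HQ) as Hc.
  pose proof (qpoch_opp_neq0 _ (S N) HQ) as Hc'. rewrite qpoch_S in Hc'.
  pose proof (Csub_one_neq0 q Hq) as H1q.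
  replace (Cpow q (2 * N + 1)) with (Cmul q (Cpow (Cpow q 2) N))
    by (rewrite Nat.add_comm, <- Cpow_mul; reflexivity).
  unfold telescoper. rewrite !qpoch_S.
  change (Cpow (Cpow q 2) (S N)) with (Cmul (Cpow q 2) (Cpow (Cpow q 2) N)).
  set (X := Cpow (Cpow q 2) N) in *.
  set (c := qpoch (Copp (Cpow q 2)) (Cpow q 2) N) in *.
  assert (Hfactor : Csub Cone (Cmul (Copp (Cpow q 2)) X) <> Czero).
  { intro E. apply Hc'. rewrite E. ring. }
  field. repeat split; assumption.
Qed.

Lemma partial_sum_closed_form q A N : Cmod q < 1 ->
  Csum (fun n => Cmul (Cmul (Cpow q (2 * n + 1)) (qpoch (Copp q) (Cpow q 2) n))
                      (Cdiv A (qpoch (Copp (Cpow q 2)) (Cpow q 2) n))) N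
  = Cmul (Cdiv q (Csub Cone q)) (Csub (Cmul A (RtoC 2)) (Cmul A (telescoper q N))).
Proof.
  intros Hq. rewrite (Csum_telescope _ (telescoper q) (Cmul A (Cdiv q (Csub Cone q)))).
  - rewrite telescoper_0. ring.
  - intros n.
    transitivity (Cmul A (Cmul (Cpow q (2 * n + 1))
      (Cdiv (qpoch (Copp q) (Cpow q 2) n) (qpoch (Copp (Cpow q 2)) (Cpow q 2) n)))).
    + unfold Cdiv. ring.
    + rewrite (telescoper_step q n Hq). ring.
Qed.

Lemma telescoper_lim q A B : Cmod q < 1 ->
  qpoch_inf_is (Copp (Cpow q 2)) (Cpow q 2) A -> qpoch_inf_is (Copp q) (Cpow q 2) B ->
  Ccv (fun N => Cmul A (telescoper q N)) (Cmul A (Cdiv B A)).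
Proof.
  intros Hq HA HB.
  assert (Hnum : Ccv (fun N => Cmul (qpoch (Copp q) (Cpow q 2) N) (Cadd Cone (Cpow (Cpow q 2) N)))
                     (Cmul B (Cadd Cone Czero))).
  { apply Ccv_mul; [exact HB |].
    apply Ccv_add; [apply Ccv_const | apply Ccv_pow_lt1, Cmod_sqr_lt1, Hq]. }
  replace (Cmul B (Cadd Cone Czero)) with B in Hnum by ring.
  exact (Ccv_mul_div_lim _ _ _ _ Hnum HA).
Qed.

Theorem theorem1p1 (q : Cplx) (hq : Cmod q < 1) :
  exists (P : nat -> Cplx) (A B : Cplx),
    (forall n : nat, qpoch_inf_is (Copp (Cpow q (2 * n + 2))) (Cpow q 2) (P n)) /\
    qpoch_inf_is (Copp (Cpow q 2)) (Cpow q 2) A /\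
    qpoch_inf_is (Copp q) (Cpow q 2) B /\
    series_is
      (fun n => Cmul (Cmul (Cpow q (2 * n + 1)) (qpoch (Copp q) (Cpow q 2) n)) (P n))
      (Cmul (Cdiv (Cmul q A) (Csub Cone q)) (Csub (RtoC 2) (Cdiv B A))).
Proof.
  pose proof (Cmod_sqr_lt1 q hq) as HQ.
  destruct (qpoch_inf_exists (Copp (Cpow q 2)) (Cpow q 2) HQ) as [A HA].
  destruct (qpoch_inf_exists (Copp q) (Cpow q 2) HQ) as [B HB].
  exists (fun n => Cdiv A (qpoch (Copp (Cpow q 2)) (Cpow q 2) n)), A, B.
  split; [| split; [exact HA | split; [exact HB |]]].
  - intros n.
    replace (Copp (Cpow q (2 * n + 2))) with (Cmul (Copp (Cpow q 2)) (Cpow (Cpow q 2) n)).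
    + apply qpoch_inf_tail; [apply qpoch_opp_neq0, HQ | exact HA].
    + replace (2 * n + 2)%nat with (2 * S n)%nat by lia.
      rewrite Cpow_mul.
      change (Cpow (Cpow q 2) (S n)) with (Cmul (Cpow q 2) (Cpow (Cpow q 2) n)). ring.
  - unfold series_is.
    eapply Ccv_ext; [intros N; symmetry; apply partial_sum_closed_form, hq |].
    replace (Cmul (Cdiv (Cmul q A) (Csub Cone q)) (Csub (RtoC 2) (Cdiv B A)))
      with (Cmul (Cdiv q (Csub Cone q)) (Csub (Cmul A (RtoC 2)) (Cmul A (Cdiv B A))))
      by (unfold Cdiv; ring).
    apply Ccv_mul; [apply Ccv_const |].
    apply Ccv_sub; [apply Ccv_const | apply telescoper_lim; assumption].
Qed.
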